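(* Let $\mathfrak g\xrightarrow{\mu}\mathfrak h$ be a crossed module of Lie algebras with action $\mathcal L$. Let $(\omega,\varphi)$ and $(\omega',\varphi')$ be pairs in $\bigwedge^2\mathfrak h^*\oplus(\mathfrak g\oplus\mathfrak h)^*$, each satisfying the cocycle conditions (1)–(3) below. Suppose there is $\psi\in\mathfrak h^*$ with $\omega(y_0,y_1)-\omega'(y_0,y_1)=-\psi([y_0,y_1])$ for all $y_0,y_1\in\mathfrak h$ and $\varphi(x,y)-\varphi'(x,y)=\psi(\mu(x))$ for all $(x,y)\in\mathfrak g\oplus\mathfrak h$. Then the induced extensions are isomorphic: the map $\mathfrak h\oplus^\omega\mathbb R\to\mathfrak h\oplus^{\omega'}\mathbb R$, $(y,\lambda)\mapsto(y,\lambda-\psi(y))$, together with the identity of $\mathfrak g$, is an isomorphism of crossed modules from $\mathfrak g\xrightarrow{\mu_\varphi}\mathfrak h\oplus^\omega\mathbb R$ to $\mathfrak g\xrightarrow{\mu_{\varphi'}}\mathfrak h\oplus^{\omega'}\mathbb R$ compatible with the inclusions of $\mathbb R$ and the projections to $\mathfrak h$.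
   Context: A crossed module of Lie algebras: Lie algebras $\mathfrak g,\mathfrak h$, Lie homomorphism $\mu:\mathfrak g\to\mathfrak h$, Lie homomorphism $\mathcal L:\mathfrak h\to\mathrm{Der}(\mathfrak g)$ with $\mu(\mathcal L_yx)=[y,\mu(x)]$, $\mathcal L_{\mu(x_0)}x_1=[x_0,x_1]$. $[(x_0,y_0),(x_1,y_1)]_{\mathcal L}=([x_0,x_1]+\mathcal L_{y_0}x_1-\mathcal L_{y_1}x_0,[y_0,y_1])$. Cocycle conditions for $(\omega,\varphi)$: (1) $-\omega([y_0,y_1],y_2)+\omega([y_0,y_2],y_1)-\omega([y_1,y_2],y_0)=0$; (2) $\varphi(x_2,y)-\varphi(x_1+x_2,y)+\varphi(x_1,y+\mu(x_2))=0$; (3) $\omega(y_0,y_1)-\omega(y_0+\mu(x_0),y_1+\mu(x_1))=\varphi([(x_0,y_0),(x_1,y_1)]_{\mathcal L})$. $\mathfrak h\oplus^\omega\mathbb R$ is $\mathfrak h\oplus\mathbb R$ with bracket $[(y_0,\lambda_0),(y_1,\lambda_1)]_\omega=([y_0,y_1],-\omega(y_0,y_1))$. The induced extension of $(\omega,\varphi)$ is the crossed module $\mu_\varphi:\mathfrak g\to\mathfrak h\oplus^\omega\mathbb R$, $x\mapsto(\mu(x),\varphi(x,0))$, with action $\mathcal L_{(y,\lambda)}x=\mathcal L_yx$, sitting in the short exact sequence of crossed modules $0\to(0\to\mathbb R)\to(\mathfrak g\xrightarrow{\mu_\varphi}\mathfrak h\oplus^\omega\mathbb R)\to(\mathfrak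 g\xrightarrow{\mu}\mathfrak h)\to0$ (identity on $\mathfrak g$, inclusion $\lambda\mapsto(0,\lambda)$, projection $(y,\lambda)\mapsto y$). An isomorphism of crossed modules is a pair of Lie algebra isomorphisms commuting with the structure maps and intertwining the actions. *)

From HB Require Import structures.
From mathcomp Require Import all_boot all_algebra.
From mathcomp Require Import reals.
Set Implicit Arguments. Unset Strict Implicit. Unset Printing Implicit Defensive.
Import GRing.Theory.
Local Open Scope ring_scope.

Definition linmap {R : pzRingType} {U V : lmodType R} (f : U -> V) : Prop :=
  forall (a : R) (u v : U), f (a *: u + v) = a *: f u + f v.
Definition linform {R : pzRingType} {U : lmodType R} (f : U -> R) : Prop :=
  forall (a : R) (u v : U), f (a *: u + v) = a * f u + f v.

Definition is_lie {R : pzRingType} {V : lmodType R} (br : V -> V -> V) : Prop :=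
  [/\ (forall x, linmap (br x)),
      (forall y, linmap (fun x => br x y)),
      (forall x, br x x = 0) &
      (forall x y z, br x (br y z) + br y (br z x) + br z (br x y) = 0)].

Definition lie_hom {R : pzRingType} {U V : lmodType R}
  (brU : U -> U -> U) (brV : V -> V -> V) (f : U -> V) : Prop :=
  linmap f /\ forall x y, f (brU x y) = brV (f x) (f y).

Definition lie_iso {R : pzRingType} {U V : lmodType R}
  (brU : U -> U -> U) (brV : V -> V -> V) (f : U -> V) : Prop :=
  lie_hom brU brV f /\ bijective f.

Definition is_derivation {R : pzRingType} {V : lmodType R}
  (br : V -> V -> V) (D : V -> V) : Prop :=
  linmap D /\ forall x y, D (br x y) = br (D x) y + br x (D y).

(* crossed module g --mu--> h with action L : h -> Der(g) (Lie hom,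
   Der(g) carrying the commutator bracket) *)
Definition is_crossed_module {R : pzRingType} {G H : lmodType R}
  (brg : G -> G -> G) (brh : H -> H -> H) (mu : G -> H) (L : H -> G -> G) : Prop :=
  is_lie brg /\ is_lie brh /\ lie_hom brg brh mu /\
  (forall y, is_derivation brg (L y)) /\
  (forall a y y' x, L (a *: y + y') x = a *: L y x + L y' x) /\
  (forall y0 y1 x, L (brh y0 y1) x = L y0 (L y1 x) - L y1 (L y0 x)) /\
  (forall y x, mu (L y x) = brh y (mu x)) /\
  (forall x0 x1, L (mu x0) x1 = brg x0 x1).

Definition is_cm_iso {R : pzRingType} {G H G' H' : lmodType R}
  (brg : G -> G -> G) (brh : H -> H -> H) (mu : G -> H) (L : H -> G -> G)
  (brg' : G' -> G' -> G') (brh' : H' -> H' -> H') (mu' : G' -> H')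
  (L' : H' -> G' -> G') (F : G -> G') (Gm : H -> H') : Prop :=
  [/\ lie_iso brg brg' F, lie_iso brh brh' Gm,
      (forall x, Gm (mu x) = mu' (F x)) &
      (forall y x, F (L y x) = L' (Gm y) (F x))].

Definition brL {R : pzRingType} {G H : lmodType R}
  (brg : G -> G -> G) (brh : H -> H -> H) (L : H -> G -> G)
  (p q : G * H) : G * H :=
  (brg p.1 q.1 + L p.2 q.1 - L q.2 p.1, brh p.2 q.2).

Definition alt2form {R : pzRingType} {H : lmodType R} (om : H -> H -> R) : Prop :=
  (forall y, linform (om y)) /\ (forall y0 y1, om y0 y1 = - om y1 y0).

Definition is_cocycle {R : pzRingType} {G H : lmodType R}
  (brg : G -> G -> G) (brh : H -> H -> H) (mu : G -> H) (L : H -> G -> G)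
  (om : H -> H -> R) (phi : G * H -> R) : Prop :=
  [/\ alt2form om, linform phi,
      (forall y0 y1 y2,
          - om (brh y0 y1) y2 + om (brh y0 y2) y1 - om (brh y1 y2) y0 = 0),
      (forall x1 x2 y,
          phi (x2, y) - phi (x1 + x2, y) + phi (x1, y + mu x2) = 0) &
      (forall x0 y0 x1 y1,
          om y0 y1 - om (y0 + mu x0) (y1 + mu x1)
          = phi (brL brg brh L (x0, y0) (x1, y1)))].

Definition ext_br {R : pzRingType} {H : lmodType R} (brh : H -> H -> H)
  (om : H -> H -> R) (p q : H * R^o) : H * R^o :=
  (brh p.1 q.1, - om p.1 q.1).

Definition ext_mu {R : pzRingType} {G H : lmodType R} (mu : G -> H)
  (phi : G * H -> R) (x : G) : H * R^o := (mu x, phi (x, 0)).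

Definition ext_L {R : pzRingType} {G H : lmodType R} (L : H -> G -> G)
  (p : H * R^o) (x : G) : G := L p.1 x.

From mathcomp Require Import all_boot all_algebra.
From mathcomp Require Import reals.
Set Implicit Arguments. Unset Strict Implicit. Unset Printing Implicit Defensive.
Import GRing.Theory.
Local Open Scope ring_scope.

(* The shear (y, lam) |-> (y, lam - psi y) is linear, has the shear by -psi
   as inverse, and fixes the h-component, on which the action depends.  It
   turns the bracket of h (+)^om R into that of h (+)^om' R because om - om'
   is the coboundary -psi o [.,.], and it carries mu_phi to mu_phi' because
   phi - phi' = psi o mu. *)

Section Shear.
Variables (R : pzRingType) (G H : lmodType R).

Lemma linform0 (f : H -> R) : linform f -> f 0 = 0.
Proof.
move=> lin_f; have := lin_f 1 0 0; rewrite scaler0 addr0 mul1r => f0.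
by apply: (addrI (f 0)); rewrite addr0 -f0.
Qed.

Definition shear (psi : H -> R) (p : H * R^o) : H * R^o := (p.1, p.2 - psi p.1).

Lemma shear_fst (psi : H -> R) (p : H * R^o) : (shear psi p).1 = p.1.
Proof. by []. Qed.

Lemma shear0l (psi : H -> R) (lam : R^o) :
  linform psi -> shear psi (0, lam) = (0, lam).
Proof. by move=> lin_psi; rewrite /shear /= linform0 // subr0. Qed.

Lemma shearK (psi : H -> R) : cancel (shear psi) (shear (fun y => - psi y)).
Proof. by case=> y lam; rewrite /shear /= opprK subrK. Qed.

Lemma shear_bij (psi : H -> R) : bijective (shear psi).
Proof.
exists (shear (fun y => - psi y)); first exact: shearK.
by case=> y lam; rewrite /shear /= opprK addrK.
Qed.

Lemma linmap_shear (psi : H -> R) : linform psi -> linmap (shear psi).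
Proof.
move=> lin_psi a [u lu] [v lv]; rewrite /shear /= lin_psi.
by congr pair; rewrite /= scalerBr opprD addrACA.
Qed.

Lemma shear_ext_br (brh : H -> H -> H) (om om' : H -> H -> R) (psi : H -> R) :
  (forall y0 y1, om y0 y1 - om' y0 y1 = - psi (brh y0 y1)) ->
  forall p q, shear psi (ext_br brh om p q)
              = ext_br brh om' (shear psi p) (shear psi q).
Proof.
move=> dom p q; rewrite /shear /ext_br /=; congr pair.
by rewrite -[om' _ _](subKr (om p.1 q.1)) dom opprB addrC.
Qed.

Lemma lie_iso_shear (brh : H -> H -> H) (om om' : H -> H -> R) (psi : H -> R) :
  linform psi -> (forall y0 y1, om y0 y1 - om' y0 y1 = - psi (brh y0 y1)) ->
  lie_iso (ext_br brh om) (ext_br brh om') (shear psi).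
Proof.
move=> lin_psi dom; split; last exact: shear_bij.
by split; [exact: linmap_shear | exact: shear_ext_br].
Qed.

Lemma shear_ext_mu (mu : G -> H) (phi phi' : G * H -> R) (psi : H -> R) :
  (forall x, phi (x, 0) - phi' (x, 0) = psi (mu x)) ->
  forall x, shear psi (ext_mu mu phi x) = ext_mu mu phi' x.
Proof. by move=> dphi x; rewrite /shear /ext_mu /= -dphi opprB subrKC. Qed.

Lemma ext_L_shear (L : H -> G -> G) (psi : H -> R) (p : H * R^o) (x : G) :
  ext_L L p x = ext_L L (shear psi p) x.
Proof. by []. Qed.

End Shear.

Lemma lie_iso_id (R : pzRingType) (V : lmodType R) (br : V -> V -> V) :
  lie_iso br br id.
Proof. by split; [split | exists id]. Qed.

Theorem mainTheorem16 (R : realType) (G H : lmodType R)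
  (brg : G -> G -> G) (brh : H -> H -> H) (mu : G -> H) (L : H -> G -> G)
  (om om' : H -> H -> R) (phi phi' : G * H -> R) (psi : H -> R) :
  is_crossed_module brg brh mu L ->
  is_cocycle brg brh mu L om phi ->
  is_cocycle brg brh mu L om' phi' ->
  linform psi ->
  (forall y0 y1, om y0 y1 - om' y0 y1 = - psi (brh y0 y1)) ->
  (forall (x : G) (y : H), phi (x, y) - phi' (x, y) = psi (mu x)) ->
  let Gm := fun p : H * R^o => (p.1, p.2 - psi p.1) : H * R^o in
  [/\ is_cm_iso brg (ext_br brh om) (ext_mu mu phi) (ext_L L)
                brg (ext_br brh om') (ext_mu mu phi') (ext_L L)
                id Gm,
      (forall lam : R^o, Gm (0, lam) = (0, lam)) &
      (forall p : H * R^o, (Gm p).1 = p.1)].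
Proof.
move=> _ _ _ lin_psi dom dphi Gm; have -> : Gm = shear psi by [].
split; [split | move=> lam; exact: shear0l | exact: shear_fst].
- exact: lie_iso_id.
- exact: lie_iso_shear.
- exact: shear_ext_mu (fun x => dphi x 0).
- exact: ext_L_shear.
Qed.
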